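(* Let $w\in S_n$ be inverse fireworks. For each $r\in[n]$, $\mathsf{rajcode}(w)_r=\left|\{r'>r:\ (r,r')\in\mathsf{Inv}(w),\ \text{or } \big(w(r')>w(r)\text{ and }(r',r'')\in\mathsf{Inv}(w)\text{ for some }r''\big)\}\right|.$
   Context: A permutation is fireworks if the initial elements of its maximal decreasing runs (in one-line notation) are increasing; $w$ is inverse fireworks if $w^{-1}$ is fireworks. $\mathsf{Inv}(w)=\{(i,j):i<j,w(i)>w(j)\}$. $\mathrm{LIS}^w(q)$ is the length of the longest increasing subsequence of $w$ starting with $q$, and $\mathsf{rajcode}(w)_r=n+1-r-\mathrm{LIS}^w(w(r))$ for $r\in[n]$. *)

(* Permutations of [n] are modelled as 'S_n acting on 'I_n,
   i.e. positions and values are 0-indexed ({0,...,n-1} instead of {1,...,n}). *)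
From mathcomp Require Import all_boot all_order all_fingroup.
Set Implicit Arguments. Unset Strict Implicit. Unset Printing Implicit Defensive.

Definition is_inversion {n} (w : 'S_n) (i j : 'I_n) : bool := (i < j) && (w j < w i).

(* Position i starts a maximal decreasing run of the one-line notation
   w(0) w(1) ... w(n-1): either i = 0 or w(i-1) < w(i). *)
Definition run_start {n} (w : 'S_n) (i : 'I_n) : bool :=
  (i == 0 :> nat) || [exists j : 'I_n, (j.+1 == i :> nat) && (w j < w i)].

Definition fireworks {n} (w : 'S_n) : bool :=
  [forall i : 'I_n, forall j : 'I_n,
     (run_start w i && run_start w j && (i < j)) ==> (w i < w j)].

Definition inverse_fireworks {n} (w : 'S_n) : bool := fireworks w^-1.

(* S is (the set of positions of) an increasing subsequence of w starting at
   position r, i.e. starting with the value w(r). *)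
Definition inc_from {n} (w : 'S_n) (r : 'I_n) (S : {set 'I_n}) : bool :=
  (r \in S) && [forall i in S, r <= i] &&
  [forall i in S, forall j in S, (i < j) ==> (w i < w j)].

Definition LIS_from {n} (w : 'S_n) (r : 'I_n) : nat :=
  \max_(S : {set 'I_n} | inc_from w r S) #|S|.

(* rajcode(w)_r = n + 1 - r - LIS^w(w(r)) for 1-indexed r; with the 0-indexed
   position r this is n - r - LIS. *)
Definition rajcode {n} (w : 'S_n) (r : 'I_n) : nat := n - r - LIS_from w r.

From mathcomp Require Import all_boot all_order all_fingroup.
From mathcomp Require Import zify.
Set Implicit Arguments. Unset Strict Implicit.

(* The right-to-left minima t > r with w(t) > w(r) always extend w(r)
   to an increasing subsequence. For w inverse fireworks this is a longest
   one. Indeed, if r < s and w(r) < w(s), let v be the least value right of r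
   and above w(r). By minimality v - 1 occurs left of v, so v starts a
   decreasing run of w^-1, and fireworks forces every entry right of v to
   exceed v - 1: v is a right-to-left minimum. Hence the right-to-left minima
   above s form a proper subset of those above r, and LIS^w(w(r)) is one more
   than their number. The positions counted in the theorem are exactly the
   other positions right of r. *)

Lemma card_ord_gt n (r : 'I_n) : #|[set s : 'I_n | r < s]| = n - r.+1.
Proof.
have -> : [set s : 'I_n | r < s] = ~: [set s : 'I_n | s <= r].
  by apply/setP => s; rewrite !inE ltnNge.
rewrite cardsCs card_ord setCK cardsE cardE -(size_map val) /enum_mem.
rewrite -(@filter_map _ _ val (fun i => i <= r)) -enumT val_enum_ord.
by rewrite (filter_iota_leq 0 (ltn_ord r)) size_iota.
Qed.

Section RunStarts.

Variables (n : nat) (u : 'S_n).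

Lemma perm_ltNgt (a b : 'I_n) : a != b -> (u a < u b) = ~~ (u b < u a).
Proof. by move=> ab; rewrite ltnNge leq_eqVlt val_eqE (inj_eq perm_inj) eq_sym (negbTE ab). Qed.

Lemma exists_run_start_le (c : 'I_n) :
  exists2 c' : 'I_n, c' <= c & run_start u c' && (u c <= u c').
Proof.
case: c => k; elim: k => [|k IH] lt_k_n; set c := Ordinal lt_k_n.
  by exists c => //; rewrite /run_start eqxx leqnn.
have [rs_c | not_rs_c] := boolP (run_start u c); first by exists c; rewrite ?rs_c ?leqnn.
pose d := Ordinal (ltnW lt_k_n).
have lt_ucd : u c < u d.
  rewrite perm_ltNgt; last exact: negbT (gtn_eqF (ltnSn k)).
  by apply: contra not_rs_c => lt_udc; apply/orP; right; apply/existsP; exists d; rewrite eqxx.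
have [c' le_c'd /andP[rs_c' le_udc']] := IH (ltnW lt_k_n).
by exists c'; [exact: leqW | rewrite rs_c' (leq_trans (ltnW lt_ucd))].
Qed.

Lemma fireworks_lt (i j : 'I_n) :
  fireworks u -> run_start u i -> run_start u j -> i < j -> u i < u j.
Proof.
by move=> /forallP /(_ i) /forallP /(_ j) /implyP fw rs_i rs_j ij; apply: fw; rewrite rs_i rs_j.
Qed.

End RunStarts.

Section RightToLeftMinima.

Variables (n : nat) (w : 'S_n).

Definition rl_minimum (t : 'I_n) : bool := ~~ [exists u, is_inversion w t u].

Definition rl_minima_above (r : 'I_n) : {set 'I_n} :=
  [set t : 'I_n | (r < t) && (w r < w t) && rl_minimum t].

Lemma rl_minimum_lt (i j : 'I_n) : rl_minimum i -> i < j -> w i < w j.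
Proof.
move=> min_i ij; rewrite perm_ltNgt; last exact: negbT (ltn_eqF ij).
by apply: contra min_i => lt_ji; apply/existsP; exists j; rewrite /is_inversion ij.
Qed.

Lemma inc_from_rl_minima (r : 'I_n) : inc_from w r (r |: rl_minima_above r).
Proof.
rewrite /inc_from setU11; apply/andP; split.
  by apply/forallP => i; rewrite !inE; apply/implyP => /orP[/eqP->|/andP[/andP[/ltnW]]].
apply/forallP => i; apply/implyP; rewrite !inE => Si.
apply/forallP => j; apply/implyP; rewrite !inE => Sj; apply/implyP => ij.
case/orP: Si => [/eqP ir | /andP[_ min_i]]; last exact: rl_minimum_lt.
rewrite ir in ij *; case/orP: Sj => [/eqP jr | /andP[/andP[_ ->] _] //].
by move: ij; rewrite jr ltnn.
Qed.

Lemma inc_from_setD1 (r s : 'I_n) (S : {set 'I_n}) :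
  inc_from w r S -> s \in S :\ r -> (forall t, t \in S :\ r -> s <= t) ->
  [/\ r < s, w r < w s & inc_from w s (S :\ r)].
Proof.
move=> /andP[/andP[Sr /forallP ge_r] /forallP incS] s_Sr min_s.
move: (s_Sr); rewrite !inE => /andP[sr Ss].
have lt_rs : r < s.
  by rewrite ltn_neqAle (implyP (ge_r s) Ss) andbT val_eqE eq_sym.
split=> //; first by move: (incS r) => /implyP /(_ Sr) /forallP /(_ s) /implyP /(_ Ss) /implyP; apply.
rewrite /inc_from s_Sr /=; apply/andP; split.
  by apply/forallP => i; apply/implyP; apply: min_s.
apply/forallP => i; apply/implyP; rewrite !inE => /andP[_ Si].
apply/forallP => j; apply/implyP; rewrite !inE => /andP[_ Sj].
by move: (incS i) => /implyP /(_ Si) /forallP /(_ j) /implyP /(_ Sj).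
Qed.

Hypothesis fw : inverse_fireworks w.

Lemma inverse_fireworks_right_of_succ (p q t : 'I_n) :
  p < q -> w q = (w p).+1 :> nat -> q < t -> w p < w t.
Proof.
move=> pq wq_succ qt.
rewrite perm_ltNgt; last exact: negbT (ltn_eqF (ltn_trans pq qt)).
apply/negP => lt_wt_wp.
have [c le_c /andP[rs_c le_c_t]] := exists_run_start_le w^-1 (w t).
rewrite permK in le_c_t.
have rs_q : run_start w^-1 (w q).
  apply/orP; right; apply/existsP; exists (w p).
  by rewrite !permK wq_succ eqxx pq.
have := fireworks_lt fw rs_c rs_q ltac:(lia).
rewrite permK; lia.
Qed.

Lemma rl_minimum_least_above (r p : 'I_n) :
  r < p -> w r < w p -> (forall t : 'I_n, r < t -> w r < w t -> w p <= w t) ->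
  rl_minimum p.
Proof.
move=> rp lt_wr_wp least_p; apply/existsP => -[u /andP[pu lt_wu_wp]].
have lt_pred_n : (w p).-1 < n by have := ltn_ord (w p); lia.
pose q := (w^-1)%g (Ordinal lt_pred_n).
have wq_pred : w q = (w p).-1 :> nat by rewrite /q permKV.
have qr : q <= r.
  rewrite leqNgt; apply/negP => rq.
  have lt_wr_wq : w r < w q.
    by rewrite perm_ltNgt ?(negbT (ltn_eqF rq)) // -leqNgt; lia.
  by have := least_p q rq lt_wr_wq; lia.
have := inverse_fireworks_right_of_succ (p := q) (q := p) ltac:(lia) ltac:(lia) pu.
lia.
Qed.

Lemma rl_minima_above_proper (r s : 'I_n) :
  r < s -> w r < w s -> rl_minima_above s \proper rl_minima_above r.
Proof.
move=> rs lt_wr_ws; apply/properP; split.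
  by apply/subsetP => t; rewrite !inE => /andP[/andP[st ws_wt] ->]; rewrite andbT; lia.
have above_s : (r < s) && (w r < w s) by rewrite rs lt_wr_ws.
have [p /andP[rp lt_wr_wp] least_p] :=
  @arg_minnP _ s (fun t => (r < t) && (w r < w t)) (fun t => nat_of_ord (w t)) above_s.
exists p.
  rewrite inE rp lt_wr_wp (@rl_minimum_least_above r) // => t rt wr_wt.
  by apply: least_p; rewrite rt wr_wt.
rewrite inE; apply/negP => /andP[/andP[_ lt_ws_wp] _].
by have := least_p s above_s; lia.
Qed.

Lemma card_inc_from_le (r : 'I_n) (S : {set 'I_n}) :
  inc_from w r S -> #|S| <= (#|rl_minima_above r|).+1.
Proof.
move=> incS; have Sr : r \in S by case/andP: incS => /andP[].
have [m] := ubnP #|S|; elim: m r S Sr incS => // m IH r S Sr incS lt_S_m.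
rewrite (cardsD1 r S) Sr add1n ltnS.
have [->|[s0 s0_Sr]] := set_0Vmem (S :\ r); first by rewrite cards0.
have [s s_Sr min_s] := arg_minnP (fun t : 'I_n => val t) s0_Sr.
have [rs lt_wr_ws incSr] := inc_from_setD1 incS s_Sr min_s.
have lt_Sr_m : #|S :\ r| < m by move: lt_S_m; rewrite (cardsD1 r S) Sr.
apply: leq_trans (IH s _ s_Sr incSr lt_Sr_m) _.
exact: proper_card (rl_minima_above_proper rs lt_wr_ws).
Qed.

Lemma LIS_from_rl_minima (r : 'I_n) : LIS_from w r = (#|rl_minima_above r|).+1.
Proof.
apply/eqP; rewrite eqn_leq; apply/andP; split.
  by apply/bigmax_leqP => S; apply: card_inc_from_le.
have := @leq_bigmax_cond _ (inc_from w r) (fun S : {set 'I_n} => #|S|) _ (inc_from_rl_minima r).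
by rewrite cardsU1 inE ltnn.
Qed.

End RightToLeftMinima.

Theorem proposition5p9 (n : nat) (w : 'S_n) :
  inverse_fireworks w ->
  forall r : 'I_n,
    rajcode w r =
    #|[set s : 'I_n | (r < s)%N &&
         (is_inversion w r s ||
          ((w r < w s)%N && [exists t : 'I_n, is_inversion w s t]))]|.
Proof.
move=> fw r; rewrite /rajcode LIS_from_rl_minima //.
have -> : [set s : 'I_n | (r < s)%N &&
         (is_inversion w r s ||
          ((w r < w s)%N && [exists t : 'I_n, is_inversion w s t]))]
    = [set s : 'I_n | r < s] :\: rl_minima_above w r.
  apply/setP => s; rewrite !inE /is_inversion /rl_minimum.
  case: (ltnP r s) => //= rs; rewrite andbT perm_ltNgt; last exact: negbT (gtn_eqF rs).
  by case: (w r < w s); rewrite //= negbK.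
rewrite cardsD card_ord_gt (setIidPr _); first by rewrite -!subnDA addnS addSn.
by apply/subsetP => t; rewrite !inE => /andP[/andP[->]].
Qed.
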